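(* Consider the planted $k$-factor model with $p=\lambda/n$ and suppose $\lambda k\le 1+\epsilon$ for some $\epsilon\in(0,1)$. Let $$\beta=\max\Big\{4\log(1+\epsilon),\ \sqrt{\tfrac{8\log n}{n}}\Big\}$$ and let $\widehat H$ be any estimator that outputs a $k$-factor contained in $G$. Then, conditioned on any realization of $H^*$, $$\mathbb P\{\ell(\widehat H,H^* )\ge 2\beta\mid H^*\}\le e^{1/2}\beta\qquad\text{and}\qquad \mathbb E[\ell(\widehat H,H^* )\mid H^*]\le 6\beta.$$
   Context: Planted $k$-factor model: fix an integer $k\ge1$ and $n$ with $kn$ even. A $k$-factor on $[n]$ is a $k$-regular simple graph with vertex set $[n]$, identified with its edge set; $\mathcal H$ is the set of all $k$-factors on $[n]$. Let $p=\lambda/n\in[0,1]$. Draw $H^*$ uniformly at random from $\mathcal H$ and, independently, $G_0\sim\mathcal G(n,p)$ (each of the $\binom n2$ vertex pairs is an edge independently with probability $p$). The observed graph is $G=G_0\cup H^*$. An estimator is a function $\widehat H=\widehat H(G)$ taking values in sets of edges of the complete graph on $[n]$. The reconstruction error is $\ell(H^*,\widehat H)=\ell(\widehat H,H^* )=|H^*\triangle\widehat H|/|H^*|$, where $|H^*|=kn/2$. *)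

From HB Require Import structures.
From mathcomp Require Import all_boot all_order all_algebra.
From mathcomp Require Import reals sequences exp.
Set Implicit Arguments. Unset Strict Implicit. Unset Printing Implicit Defensive.
Import Order.TTheory GRing.Theory Num.Theory.
Local Open Scope ring_scope.

(* Vertex set [n] = 'I_n.  An edge of the complete graph K_n is a 2-element
   subset of 'I_n; a (simple) graph on [n] is identified with its edge set. *)
Definition edges (n : nat) : {set {set 'I_n}} := [set e : {set 'I_n} | #|e| == 2%N].

Definition is_graph (n : nat) (G : {set {set 'I_n}}) : bool := G \subset edges n.

Definition degree (n : nat) (G : {set {set 'I_n}}) (v : 'I_n) : nat :=
  #|[set e in G | v \in e]|.

Definition kfactor (n k : nat) (H : {set {set 'I_n}}) : bool :=
  is_graph H && [forall v : 'I_n, degree H v == k].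

Definition symdiff (T : finType) (A B : {set T}) : {set T} := (A :\: B) :|: (B :\: A).

Definition loss (R : realType) (n : nat) (H Hh : {set {set 'I_n}}) : R :=
  (#|symdiff H Hh|)%:R / (#|H|)%:R.

Definition gnp_weight (R : realType) (n : nat) (p : R) (G0 : {set {set 'I_n}}) : R :=
  p ^+ #|G0| * (1 - p) ^+ (#|edges n| - #|G0|).

(* Conditional on Hstar = H, the only randomness is G0 ~ G(n,p) (independent of Hstar),
   and the observed graph is G = G0 :|: H. *)
Definition cond_prob (R : realType) (n : nat) (p : R) (H : {set {set 'I_n}})
    (E : {set {set 'I_n}} -> bool) : R :=
  \sum_(G0 in powerset (edges n)) gnp_weight p G0 * (E (G0 :|: H))%:R.

Definition cond_expect (R : realType) (n : nat) (p : R) (H : {set {set 'I_n}})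
    (X : {set {set 'I_n}} -> R) : R :=
  \sum_(G0 in powerset (edges n)) gnp_weight p G0 * X (G0 :|: H).

(* Write N = |H*| = kn/2. If the loss is at least 2β, the estimate is a k-factor F of
   G = G0 ∪ H* with m := |F \ H*| ≥ βN, and G0 contains the m edges of F \ H*. Such an F
   is determined by D = H* \ F, a set of m edges of H*, together with F \ H*, a graph with
   the same degree sequence as D; a degree sequence d of total 2m is realised by at most
   (2m-1)!! / ∏ d_v! graphs. A union bound therefore gives
     P(loss ≥ 2β) ≤ Σ_{m ≥ βN} C(N,m) (2m-1)!! p^m ≤ Σ_{m ≥ βN} (2Np)^m ∏_{i<m} (1 - i/N)
                 ≤ Σ_{m ≥ βN} exp(m log(1+ε) - m(m-1)/(2N)) ≤ e^{β/2} Σ_{m ≥ βN} e^{-mβ/4},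
   using 2Np = λk ≤ 1+ε and β ≥ 4 log(1+ε); β² ≥ 8 log n / n makes the geometric tail at
   most e^{1/2} β. Since the loss never exceeds 2, E[loss] ≤ 2β + 2 e^{1/2} β ≤ 6β. *)

From HB Require Import structures.
From mathcomp Require Import all_boot all_order all_algebra.
From mathcomp Require Import reals sequences exp.
From mathcomp Require Import zify ring lra.
Import Order.TTheory GRing.Theory Num.Theory.
Set Implicit Arguments. Unset Strict Implicit. Unset Printing Implicit Defensive.

Lemma bigD2 (R : Type) (idx : R) (op : Monoid.com_law idx) (I : finType)
    (F : I -> R) v w : v != w ->
  \big[op/idx]_u F u = op (op (F v) (F w)) (\big[op/idx]_(u | (u != v) && (u != w)) F u).
Proof.
move=> vw; rewrite (bigD1 v) //= (bigD1 w) /=; last by rewrite eq_sym.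
by rewrite Monoid.mulmA.
Qed.

Section Graphs.
Variable n : nat.
Implicit Types (G A : {set {set 'I_n}}) (d : 'I_n -> nat).

Lemma edge_card2 G e : is_graph G -> e \in G -> #|e| = 2.
Proof. by move=> /subsetP sG /sG; rewrite inE => /eqP. Qed.

Lemma nonempty_graph_vertices G : is_graph G -> (0 < #|G|)%N -> (2 <= n)%N.
Proof.
move=> gG /card_gt0P [e eG]; rewrite -(edge_card2 gG eG).
by apply: leq_trans (max_card _) _; rewrite card_ord.
Qed.

Lemma degreeE G v : degree G v = \sum_(e in G) (v \in e : nat).
Proof.
rewrite /degree -sum1_card big_mkcond [RHS]big_mkcond /=.
by apply: eq_bigr => e _; rewrite inE; case: (e \in G); case: (v \in e).
Qed.

Lemma sum_degree G : is_graph G -> \sum_v degree G v = (2 * #|G|)%N.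
Proof.
move=> gG; rewrite (eq_bigr _ (fun v _ => degreeE G v)) exchange_big /=.
rewrite -sum1_card big_distrr /=; apply: eq_bigr => e eG.
by rewrite muln1 -(edge_card2 gG eG) -sum1_card [RHS]big_mkcond.
Qed.

Lemma degree_neighbours G v : is_graph G ->
  degree G v = #|[set w | (w != v) && ([set v; w] \in G)]|.
Proof.
move=> gG; rewrite /degree.
have inj : {in [set w | (w != v) && ([set v; w] \in G)] &, injective (fun w => [set v; w])}.
  move=> w1 w2; rewrite !inE => /andP[w1v _] _ /setP/(_ w1).
  by rewrite !inE eqxx orbT (negbTE w1v) => /esym/eqP.
rewrite -(card_in_imset inj); apply: eq_card => e; rewrite !inE.
apply/andP/imsetP => [[eG ve]|[w]]; last first.
  by rewrite inE => /andP[_ vwG] ->; rewrite vwG set21.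
have /eqP/cards2P [x [y [xy exy]]] := edge_card2 gG eG.
move: ve; rewrite exy in_set2 => /orP[] /eqP vx; subst v.
  by exists y; rewrite // inE eq_sym xy -exy eG.
by exists x; rewrite 1?setUC // inE xy /= setUC -exy.
Qed.

Lemma degreeD1 G f u : f \in G -> degree (G :\ f) u = degree G u - (u \in f).
Proof.
move=> fG; rewrite /degree.
have -> : [set e in G :\ f | u \in e] = [set e in G | u \in e] :\ f.
  by apply/setP => e; rewrite !inE andbA.
by rewrite [#|[set e in G | u \in e]|](cardsD1 f) inE fG /= addKn.
Qed.

Lemma degreeID G K v : degree G v = degree (G :&: K) v + degree (G :\: K) v.
Proof.
rewrite /degree -(cardsID K [set e in G | v \in e]); congr (_ + _); apply: eq_card => e;
  by rewrite !inE; case: (e \in G); case: (e \in K); case: (v \in e).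
Qed.

Definition graphs_of_degrees d : {set {set {set 'I_n}}} :=
  [set A | is_graph A & [forall v, degree A v == d v]].

Lemma card_graphs_of_degrees0 d : (forall v, d v = 0) -> #|graphs_of_degrees d| <= 1.
Proof.
move=> d0; rewrite -(cards1 (set0 : {set {set 'I_n}})); apply: subset_leq_card.
apply/subsetP => A; rewrite !inE => /andP[gA /forallP dA].
apply/eqP/setP => e; rewrite inE; apply/negbTE/negP => eA.
have /card_gt0P [v ve] : 0 < #|e| by rewrite (edge_card2 gA eA).
have := dA v; rewrite d0 /degree cards_eq0 => /eqP/setP/(_ e).
by rewrite !inE eA ve.
Qed.

Definition drop_edge_degrees d v w u := d u - (u == v) - (u == w).

Lemma card_graphs_through_edge d v w : v != w ->
  #|[set A in graphs_of_degrees d | [set v; w] \in A]|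
    <= #|graphs_of_degrees (drop_edge_degrees d v w)|.
Proof.
move=> vw; set f := [set v; w].
have inj : {in [set A in graphs_of_degrees d | f \in A] &, injective (fun A => A :\ f)}.
  move=> A1 A2; rewrite !inE => /andP[_ fA1] /andP[_ fA2] E.
  by rewrite -(setD1K fA1) -(setD1K fA2) E.
rewrite -(card_in_imset inj); apply: subset_leq_card; apply/subsetP => B /imsetP [A].
rewrite !inE => /andP[/andP[gA /forallP dA] fA] ->; apply/andP; split.
  exact: subset_trans (subsetDl _ _) gA.
apply/forallP => u; rewrite degreeD1 // (eqP (dA u)) /drop_edge_degrees in_set2.
by case: (eqVneq u v) => [->|_]; rewrite ?(negbTE vw) subn0.
Qed.

Lemma sum_drop_edge_degrees d v w : v != w -> 0 < d v -> 0 < d w ->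
  \sum_u d u = (\sum_u drop_edge_degrees d v w u).+2.
Proof.
move=> vw dv dw; rewrite !(bigD2 _ _ vw) /= /drop_edge_degrees !eqxx (negbTE vw).
rewrite eq_sym (negbTE vw) !subn0.
under [in RHS]eq_bigr => u /andP[/negbTE -> /negbTE ->] do rewrite !subn0.
by lia.
Qed.

Lemma prod_fact_drop_edge_degrees d v w : v != w -> 0 < d v -> 0 < d w ->
  \prod_u (d u)`! = (d v * d w * \prod_u (drop_edge_degrees d v w u)`!)%N.
Proof.
move=> vw dv dw; rewrite !(bigD2 _ _ vw) /= /drop_edge_degrees !eqxx (negbTE vw).
rewrite eq_sym (negbTE vw) !subn0.
under [in RHS]eq_bigr => u /andP[/negbTE -> /negbTE ->] do rewrite !subn0.
by case: (d v) dv => // a _; case: (d w) dw => // b _; rewrite !factS !subn1 /=; ring.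
Qed.

Lemma graphs_through_edge0 d v w : d w = 0 ->
  [set A in graphs_of_degrees d | [set v; w] \in A] = set0.
Proof.
move=> dw0; apply/setP => A; rewrite !inE; apply/negbTE/negP => /andP[/andP[_ /forallP dA] fA].
have := dA w; rewrite dw0 /degree cards_eq0 => /eqP/setP/(_ [set v; w]).
by rewrite !inE fA eqxx orbT.
Qed.

Lemma sum_card_graphs_through_edges d v :
  (d v * #|graphs_of_degrees d|)%N =
  \sum_w #|[set A in graphs_of_degrees d | (w != v) && ([set v; w] \in A)]|.
Proof.
rewrite mulnC -sum_nat_const.
transitivity (\sum_(A in graphs_of_degrees d) \sum_w ((w != v) && ([set v; w] \in A) : nat)).
  apply: eq_bigr => A; rewrite inE => /andP[gA /forallP/(_ v)/eqP <-].
  rewrite degree_neighbours // -sum1dep_card big_mkcond /=.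
  by apply: eq_bigr => w _; case: (_ && _).
rewrite exchange_big /=; apply: eq_bigr => w _.
rewrite -sum1_card big_mkcond [RHS]big_mkcond /=; apply: eq_bigr => A _.
by rewrite [in RHS]inE; case: (A \in graphs_of_degrees d) => //=; case: (_ && _).
Qed.

Definition odd_fact m := \prod_(i < m) (2 * i + 1).

Lemma odd_fact_le j : (odd_fact j <= 2 ^ j * j`!)%N.
Proof.
elim: j => [|j IH]; first by rewrite /odd_fact big_ord0.
rewrite /odd_fact big_ord_recr /= -/(odd_fact j) factS expnS.
rewrite (_ : 2 * 2 ^ j * (j.+1 * j`!) = (2 ^ j * j`!) * (2 * j.+1))%N; last by ring.
by apply: leq_mul => //; lia.
Qed.

(* Double count the pairs (A, edge {v, w} of A) at a vertex v of positive degree; deleting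
   the edge leaves a graph whose degrees sum to 2m. *)
Lemma card_graphs_of_degrees_le m d : \sum_v d v = (2 * m)%N ->
  #|graphs_of_degrees d| * \prod_v (d v)`! <= odd_fact m.
Proof.
elim: m d => [|m IH] d sd.
  have d0 v : d v = 0.
    by apply/eqP; rewrite -leqn0 -(muln0 2) -sd (bigD1 v) //= leq_addr.
  rewrite /odd_fact big_ord0 big1 ?muln1 ?card_graphs_of_degrees0 // => v _.
  by rewrite d0.
have [v dv] : exists v, 0 < d v.
  apply/existsP; move: sd; apply: contra_eqT => /existsPn d0.
  by rewrite big1 // => u _; apply/eqP; rewrite -leqn0 leqNgt d0.
have through_vw w :
    #|[set A in graphs_of_degrees d | (w != v) && ([set v; w] \in A)]| * \prod_u (d u)`!
      <= d v * ((w != v) * d w * odd_fact m).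
  case: (eqVneq w v) => [->|wv /=].
    by rewrite (_ : [set A in _ | _] = set0) ?cards0 //; apply/setP => A; rewrite !inE andbF.
  case: (posnP (d w)) => [dw0|dw].
    by rewrite graphs_through_edge0 // cards0.
  have vw : v != w by rewrite eq_sym.
  rewrite (prod_fact_drop_edge_degrees vw dv dw) mul1n [X in X <= _]mulnCA.
  rewrite [X in _ <= X]mulnA leq_mul2l; apply/orP; right.
  apply: leq_trans (leq_mul (card_graphs_through_edge d vw) (leqnn _)) (IH _ _).
  by have := sum_drop_edge_degrees vw dv dw; rewrite sd; lia.
have sum_others : \sum_w (w != v) * d w <= (2 * m + 1)%N.
  suff: \sum_w d w = d v + \sum_w (w != v) * d w by rewrite sd; lia.
  rewrite (bigD1 v) //= [X in _ = _ + X](bigD1 v) //= eqxx mul0n add0n.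
  by congr (_ + _); apply: eq_bigr => w ->; rewrite mul1n.
rewrite /odd_fact big_ord_recr /= -/(odd_fact m) -(leq_pmul2l dv) mulnA.
rewrite sum_card_graphs_through_edges big_distrl /=.
apply: leq_trans; first by apply: leq_sum => w _; apply: through_vw.
rewrite -big_distrr /= leq_pmul2l //.
under eq_bigr do rewrite mulnC.
by rewrite -big_distrr /= leq_mul2l sum_others orbT.
Qed.

End Graphs.

Section KFactors.
Variables n k : nat.
Implicit Types H F D : {set {set 'I_n}}.

Lemma kfactor_graph H : kfactor k H -> is_graph H.
Proof. by case/andP. Qed.

Lemma kfactor_degree H v : kfactor k H -> degree H v = k.
Proof. by case/andP=> _ /forallP /(_ v) /eqP. Qed.

Lemma kfactor_card H : kfactor k H -> (2 * #|H|)%N = (k * n)%N.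
Proof.
move=> kH; rewrite -sum_degree ?(kfactor_graph kH) //.
under eq_bigr do rewrite (kfactor_degree _ kH).
by rewrite sum_nat_const card_ord mulnC.
Qed.

Lemma kfactor_card_gt0 H : (0 < k)%N -> (0 < n)%N ->
  kfactor k H -> (0 < #|H|)%N.
Proof. by move=> k0 n0 /kfactor_card; rewrite lt0n; case: #|H| => [|//]; nia. Qed.

Lemma card_kfactor_setD_sym H F : kfactor k H -> kfactor k F -> #|H :\: F| = #|F :\: H|.
Proof.
move=> kH kF; have := kfactor_card kH; have := kfactor_card kF.
have := cardsID H F; have := cardsID F H; rewrite setIC; lia.
Qed.

Lemma card_kfactor_setD_le H F : kfactor k H -> kfactor k F -> #|F :\: H| <= #|H|.
Proof.
by move=> kH kF; rewrite -(card_kfactor_setD_sym kH kF) subset_leq_card ?subsetDl.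
Qed.

Lemma card_kfactors_removing H D : kfactor k H -> D \subset H ->
  #|[set F | kfactor k F & H :\: F == D]| <= #|graphs_of_degrees (degree D)|.
Proof.
move=> kH sDH; set Y := [set F | _ & _].
have inj : {in Y &, injective (fun F => F :\: H)}.
  move=> F1 F2; rewrite !inE => /andP[_ /eqP e1] /andP[_ /eqP e2] /setP E.
  have /setP E' : H :\: F1 = H :\: F2 by rewrite e1 e2.
  apply/setP => e; have := E e; have := E' e.
  by rewrite !inE; case: (e \in H); case: (e \in F1); case: (e \in F2).
rewrite -(card_in_imset inj); apply: subset_leq_card; apply/subsetP => A /imsetP [F].
rewrite !inE => /andP[kF /eqP eD] ->; apply/andP; split.
  exact: subset_trans (subsetDl _ _) (kfactor_graph kF).
apply/forallP => v; apply/eqP.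
have := degreeID F H v; have := degreeID H F v.
by rewrite (kfactor_degree _ kF) (kfactor_degree _ kH) setIC eD; lia.
Qed.

Lemma card_kfactors_at_distance H m : kfactor k H ->
  #|[set F | kfactor k F & #|F :\: H| == m]| <= 'C(#|H|, m) * odd_fact m.
Proof.
move=> kH; set Dm := [set D : {set {set 'I_n}} | D \subset H & #|D| == m].
rewrite -sum1_card (partition_big (fun F => H :\: F) (mem Dm)) /=; last first.
  move=> F; rewrite !inE => /andP[kF /eqP <-].
  by rewrite subsetDl (card_kfactor_setD_sym kH kF) /=.
rewrite -(cards_draws H m) -sum_nat_const; apply: leq_sum => D.
rewrite inE => /andP[sDH /eqP cD].
rewrite sum1dep_card (@leq_trans #|[set F | kfactor k F & H :\: F == D]|) //.
  by apply: subset_leq_card; apply/subsetP => F; rewrite !inE => /andP[/andP[-> _] ->].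
apply: leq_trans (card_kfactors_removing kH sDH) _.
have gD : is_graph D := subset_trans sDH (kfactor_graph kH).
have := card_graphs_of_degrees_le (etrans (sum_degree gD) (congr1 _ cD)).
apply: leq_trans; rewrite leq_pmulr // prodn_gt0 // => v; exact: fact_gt0.
Qed.

Definition kfactor_estimator (Hhat : {set {set 'I_n}} -> {set {set 'I_n}}) :=
  forall G : {set {set 'I_n}}, (exists F, kfactor k F && (F \subset G)) ->
    kfactor k (Hhat G) && (Hhat G \subset G).

Local Open Scope ring_scope.

Lemma loss_kfactor (R : realType) H F : kfactor k H -> kfactor k F ->
  loss R H F = (2 * #|F :\: H|)%N%:R / #|H|%:R.
Proof.
move=> kH kF; rewrite /loss /symdiff cardsU (card_kfactor_setD_sym kH kF).
rewrite (_ : (H :\: F) :&: (F :\: H) = set0) ?cards0 ?subn0 ?addnn -?mul2n //.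
by apply/setP => e; rewrite !inE; case: (e \in H); case: (e \in F).
Qed.

Lemma loss_kfactor_le2 (R : realType) H F : kfactor k H -> kfactor k F ->
  (0 < #|H|)%N -> loss R H F <= 2.
Proof.
move=> kH kF H0; rewrite (loss_kfactor R kH kF) ler_pdivrMr ?ltr0n //.
by rewrite -natrM ler_nat; have := card_kfactor_setD_le kH kF; lia.
Qed.

End KFactors.

Local Open Scope ring_scope.

Lemma sum_powerset_binomial (R : comNzRingType) (T : finType) (X : {set T}) (p q : R) :
  \sum_(B in powerset X) p ^+ #|B| * q ^+ (#|X| - #|B|) = (q + p) ^+ #|X|.
Proof.
rewrite exprDn (partition_big (fun B : {set T} => (inord #|B| : 'I_#|X|.+1)) xpredT) //=.
apply: eq_bigr => i _.
have E B : (B \in powerset X) && (inord #|B| == i :> 'I_#|X|.+1) =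
    (B \in [set C : {set T} | C \subset X & #|C| == i]).
  rewrite powersetE inE; case sBX: (B \subset X) => //=.
  by rewrite -val_eqE /= inordK // ltnS subset_leq_card.
rewrite (eq_bigl _ _ E).
under eq_bigr => B /[!inE] /andP[_ /eqP ->] do [].
by rewrite sumr_const cards_draws mulrC.
Qed.

Lemma sum_weight_supersets (R : comNzRingType) (T : finType) (E S : {set T}) (p : R) :
  S \subset E ->
  \sum_(G0 in powerset E) p ^+ #|G0| * (1 - p) ^+ (#|E| - #|G0|) * (S \subset G0)%:R
  = p ^+ #|S|.
Proof.
move=> sSE.
transitivity (\sum_(G0 in powerset E | S \subset G0) p ^+ #|G0| * (1 - p) ^+ (#|E| - #|G0|)).
  by rewrite big_mkcondr; apply: eq_bigr => G0 _; case: (S \subset G0); rewrite ?mulr1 ?mulr0.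
have disjSB B : B \in powerset (E :\: S) -> [disjoint S & B].
  by rewrite powersetE subsetD disjoint_sym => /andP[].
have inj : {in powerset (E :\: S) &, injective (fun B => S :|: B)}.
  apply: (can_in_inj (g := fun G0 => G0 :\: S)) => B /disjSB dSB.
  by rewrite setDUl setDv set0U; apply/setDidPl; rewrite disjoint_sym.
rewrite (eq_bigl (mem [set S :|: B | B in powerset (E :\: S)])); last first.
  move=> G0; apply/andP/imsetP => [[]|[B]].
    rewrite powersetE => sG0E sSG0; exists (G0 :\: S); first by rewrite powersetE setSD.
    by rewrite setDE setUIr setUCr setIT (setUidPr sSG0).
  rewrite powersetE => sB ->; split; last exact: subsetUl.
  by rewrite powersetE subUset sSE (subset_trans sB (subsetDl _ _)).
rewrite big_imset //=.
have cardSB B : B \in powerset (E :\: S) -> #|S :|: B| = (#|S| + #|B|)%N.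
  by move=> /disjSB dSB; apply/eqP; rewrite (leq_card_setU S B).2.
have cardES : #|E :\: S| = (#|E| - #|S|)%N by rewrite cardsD (setIidPr sSE).
transitivity (\sum_(B in powerset (E :\: S))
    p ^+ #|S| * (p ^+ #|B| * (1 - p) ^+ (#|E :\: S| - #|B|))).
  by apply: eq_bigr => B hB; rewrite cardSB // exprD cardES subnDA; ring.
by rewrite -big_distrr /= sum_powerset_binomial subrK expr1n mulr1.
Qed.

Section GnpModel.
Variables (R : realType) (n : nat) (p : R).
Hypothesis p01 : 0 <= p <= 1.
Implicit Types (H G : {set {set 'I_n}}) (E : {set {set 'I_n}} -> bool).

Lemma gnp_weight_ge0 (G0 : {set {set 'I_n}}) : 0 <= gnp_weight p G0.
Proof.
by case/andP: p01 => p0 p1; rewrite /gnp_weight mulr_ge0 // exprn_ge0 // subr_ge0.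
Qed.

Lemma gnp_weight_sum1 : \sum_(G0 in powerset (edges n)) gnp_weight p G0 = 1.
Proof.
rewrite -[RHS](expr0 p) -(cards0 {set 'I_n}) -(sum_weight_supersets p (sub0set (edges n))).
by apply: eq_bigr => G0 _; rewrite sub0set mulr1.
Qed.

Lemma cond_prob_le1 H E : cond_prob p H E <= 1.
Proof.
rewrite -gnp_weight_sum1; apply: ler_sum => G0 _.
by rewrite ler_piMr ?gnp_weight_ge0 // lern1 leq_b1.
Qed.

Variables (k : nat) (Hhat : {set {set 'I_n}} -> {set {set 'I_n}}) (H : {set {set 'I_n}}).
Hypotheses (kH : kfactor k H) (hat : kfactor_estimator k Hhat).

Lemma estimator_observed (G0 : {set {set 'I_n}}) :
  kfactor k (Hhat (G0 :|: H)) && (Hhat (G0 :|: H) \subset G0 :|: H).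
Proof. by apply: hat; exists H; rewrite kH subsetUr. Qed.

Lemma cond_prob_le_sum_bad (b : R) :
  cond_prob p H (fun G => 2 * b <= loss R H (Hhat G)) <=
  \sum_(F | kfactor k F && (2 * b <= loss R H F)) p ^+ #|F :\: H|.
Proof.
apply: (@le_trans _ _ (\sum_(G0 in powerset (edges n)) gnp_weight p G0 *
   \sum_(F | kfactor k F && (2 * b <= loss R H F)) (F :\: H \subset G0)%:R)).
  apply: ler_sum => G0 _; apply: ler_wpM2l; first exact: gnp_weight_ge0.
  have /andP[kF sF] := estimator_observed G0.
  case bad: (2 * b <= loss R H (Hhat (G0 :|: H))); last first.
    by rewrite sumr_ge0 // => F _; rewrite ler0n.
  rewrite (bigD1 (Hhat (G0 :|: H))) /=; last by rewrite kF bad.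
  by rewrite subDset (setUC H G0) sF ler_wpDr // sumr_ge0 // => F _.
under eq_bigr do rewrite big_distrr /=.
rewrite exchange_big /=; apply: ler_sum => F /andP[kF _].
by rewrite sum_weight_supersets // (subset_trans (subsetDl _ _) (kfactor_graph kF)).
Qed.

Lemma sum_bad_kfactors_le (b : R) : (0 < #|H|)%N -> 0 < b ->
  \sum_(F | kfactor k F && (2 * b <= loss R H F)) p ^+ #|F :\: H| <=
  \sum_(j < #|H|.+1 | b * #|H|%:R <= j%:R) ('C(#|H|, j) * odd_fact j)%N%:R * p ^+ j.
Proof.
move=> H0 b0; set N := #|H| in H0 *.
have p0 : 0 <= p by case/andP: p01.
rewrite (partition_big (fun F => (inord #|F :\: H| : 'I_N.+1)) xpredT) //=.
rewrite [X in _ <= X]big_mkcond /=; apply: ler_sum => j _.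
have distF F : kfactor k F && (2 * b <= loss R H F) && (inord #|F :\: H| == j) ->
    #|F :\: H| = j.
  move=> /andP[/andP[kF _] /eqP <-]; rewrite inordK // ltnS.
  exact: card_kfactor_setD_le kH kF.
under eq_bigr => F /distF -> do [].
rewrite sumr_const; set S := (X in #|X|).
case: ifP => bj.
  rewrite -[_ *+ #|S|]mulr_natl; apply: ler_wpM2r; rewrite ?exprn_ge0 // ler_nat.
  apply: leq_trans (card_kfactors_at_distance j kH).
  apply: subset_leq_card; apply/subsetP => F bad; rewrite inE (distF F bad) eqxx andbT.
  by case/andP: bad => /andP[].
rewrite (_ : #|S| = 0%N) ?mulr0n //; apply: eq_card0 => F; apply/negbTE/negP => bad.
have := distF F bad; case/andP: bad => /andP[kF]; rewrite (loss_kfactor R kH kF) => + _ dj.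
rewrite dj ler_pdivlMr ?ltr0n // natrM; move/negbT: bj; rewrite -ltNge; nra.
Qed.

Lemma cond_expect_loss_le (b : R) : (0 < #|H|)%N -> 0 <= b ->
  cond_expect p H (fun G => loss R H (Hhat G))
    <= 2 * b + 2 * cond_prob p H (fun G => 2 * b <= loss R H (Hhat G)).
Proof.
move=> H0 b0; rewrite /cond_expect /cond_prob.
apply: (@le_trans _ _ (\sum_(G0 in powerset (edges n)) (gnp_weight p G0 * (2 * b) +
    2 * (gnp_weight p G0 * ((2 * b <= loss R H (Hhat (G0 :|: H)))%R)%:R)))); last first.
  by rewrite big_split /= -big_distrl -big_distrr /= gnp_weight_sum1 mul1r.
apply: ler_sum => G0 _; have w0 := gnp_weight_ge0 G0.
have /andP[kF _] := estimator_observed G0.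
have l2 := loss_kfactor_le2 R kH kF H0.
case: (lerP (2 * b) (loss R H (Hhat (G0 :|: H)))) => bad /=; first nra.
by rewrite mulr0 mulr0 addr0 ler_wpM2l // ltW.
Qed.

End GnpModel.

Section RealBounds.
Variable R : realType.

Lemma expR_le_invB (x : R) : 0 <= x < 1 -> expR x <= (1 - x)^-1.
Proof.
move=> /andP[x0 x1]; have := expR_ge1Dx (- x); rewrite expRN => h.
by rewrite -(invrK (expR x)) lef_pV2 ?posrE ?invr_gt0 ?expR_gt0 ?subr_gt0.
Qed.

Lemma expR_half_le2 : expR (1 / 2) <= 2 :> R.
Proof.
apply: le_trans (expR_le_invB _) _; first by apply/andP; split; lra.
by rewrite (_ : 1 - 1 / 2 = 2^-1 :> R) ?invrK //; field.
Qed.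

Lemma ln2_ge : 5 / 8 <= ln (2 : R).
Proof.
rewrite -ler_expR lnK ?posrE // (_ : 5 / 8 = 4%:R * (5 / 32) :> R); last by field.
rewrite expRM_natl; apply: le_trans (_ : (32 / 27) ^+ 4 <= 2); last first.
  have sq : (32 / 27 : R) ^+ 2 <= 141 / 100 by rewrite expr2; lra.
  have a0 : 0 <= (32 / 27 : R) ^+ 2 by rewrite exprn_ge0 //; lra.
  rewrite (_ : 4%N = (2 * 2)%N) // exprM; move: sq a0.
  by set a := (32 / 27) ^+ 2 => sq a0; rewrite expr2; nra.
apply: lerXn2r; rewrite ?nnegrE ?expR_ge0 //; first lra.
apply: le_trans (expR_le_invB _) _; first by apply/andP; split; lra.
by rewrite (_ : 1 - 5 / 32 = 27 / 32 :> R) ?invf_div //; field.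
Qed.

Lemma one_sub_expRN_ge (x : R) : 0 <= x -> x / (1 + x) <= 1 - expR (- x).
Proof.
move=> x0; have h := expR_ge1Dx x; have ex := expR_gt0 x.
rewrite expRN (_ : 1 - (expR x)^-1 = (expR x - 1) / expR x); last by field; rewrite gt_eqF.
rewrite ler_pdivrMr; last lra.
by rewrite mulrAC ler_pdivlMr //; nra.
Qed.

Lemma sum_expR_telescope_le (c a : R) (L : nat) : 0 < c -> a <= L%:R ->
  \sum_(m < L | a <= m%:R) (expR (- (m%:R * c)) - expR (- (m.+1%:R * c)))
  <= expR (- (a * c)) - expR (- (L%:R * c)).
Proof.
move=> c0; elim: L => [|L IH] aL.
  by rewrite big_ord0 subr_ge0 ler_expR; nra.
rewrite big_mkcond big_ord_recr /= -big_mkcond /=.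
case: (lerP a L%:R) => aL'; first by have := IH aL'; lra.
rewrite big1 => [|m am]; first by rewrite add0r subr_ge0 ler_expR; nra.
by exfalso; move: (ltn_ord m); rewrite -(ltr_nat R); lra.
Qed.

Lemma sum_expR_geometric_le (c a : R) (L : nat) : 0 < c -> a <= L%:R ->
  \sum_(m < L | a <= m%:R) expR (- (m%:R * c)) <= expR (- (a * c)) / (1 - expR (- c)).
Proof.
move=> c0 aL; rewrite ler_pdivlMr ?subr_gt0 ?expR_lt1 ?oppr_lt0 // big_distrl /=.
have telescope (m : nat) : expR (- (m%:R * c)) * (1 - expR (- c)) =
    expR (- (m%:R * c)) - expR (- (m.+1%:R * c)).
  by rewrite mulrBr mulr1 -expRD -natr1; congr (_ - expR _); ring.
under eq_bigr do rewrite telescope.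
have := sum_expR_telescope_le c0 aL; have := expR_ge0 (- (L%:R * c)); lra.
Qed.

Lemma geometric_tail_le (n N : nat) (b : R) : (2 <= n)%N -> (n <= 2 * N)%N ->
  0 < b -> b <= 1 -> 8 * ln n%:R / n%:R <= b ^+ 2 ->
  expR (b / 2) * (expR (- (b * N%:R * (b / 4))) / (1 - expR (- (b / 4))))
    <= expR (1 / 2) * b.
Proof.
move=> n2 nN b0 b1 bb.
have n0 : 0 < n%:R :> R by rewrite ltr0n; lia.
have nN' : n%:R <= 2 * N%:R :> R by rewrite -natrM ler_nat.
have lnn : 5 / 8 <= ln (n%:R : R).
  by apply: le_trans (ln2_ge) _; rewrite ler_ln ?posrE ?ler_nat.
have {bb} bb : 8 * ln n%:R <= b * b * n%:R by rewrite -expr2 -ler_pdivrMr.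
have numer : expR (- (b * N%:R * (b / 4))) <= n%:R^-1.
  by rewrite -[n%:R in X in _ <= X]lnK ?posrE // -expRN ler_expR lerN2; nra.
have denom : b / 5 <= 1 - expR (- (b / 4)).
  apply: le_trans (one_sub_expRN_ge _) ; last lra.
  by rewrite ler_pdivlMr; [nra | lra].
have halfb : expR (b / 2) <= expR (1 / 2) by rewrite ler_expR; lra.
apply: ler_pM; rewrite ?expR_ge0 //.
  by rewrite mulr_ge0 ?expR_ge0 // invr_ge0; apply: le_trans denom; lra.
apply: (@le_trans _ _ (n%:R^-1 / (b / 5))).
  apply: ler_pM; rewrite ?expR_ge0 ?invr_ge0 ?lef_pV2 ?posrE //; try lra.
rewrite (_ : n%:R^-1 / (b / 5) = 5 / (b * n%:R)); last by field; apply/andP; split; lra.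
by rewrite ler_pdivrMr; nra.
Qed.

Lemma ffact_pow_le_expR (N j : nat) (p eps : R) : (j <= N)%N -> 0 <= p -> 0 < eps ->
  N%:R * 2 * p <= 1 + eps ->
  (N ^_ j * 2 ^ j)%N%:R * p ^+ j <=
  expR (j%:R * ln (1 + eps) - j%:R * (j%:R - 1) / (2 * N%:R)).
Proof.
move=> + p0 eps0 Np; elim: j => [|j IH] jN.
  by rewrite ffactn0 expn0 expr0 !mul0r subr0 expR0 mulr1.
have N0 : 0 < N%:R :> R by rewrite ltr0n (leq_ltn_trans _ jN).
rewrite (_ : (N ^_ j.+1 * 2 ^ j.+1)%N%:R * p ^+ j.+1 =
   (N ^_ j * 2 ^ j)%N%:R * p ^+ j * ((N%:R - j%:R) * 2 * p)); last first.
  by rewrite ffactnSr expnS !natrM natrB 1?ltnW // natrX exprS; ring.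
have factor_le : (N%:R - j%:R) * 2 * p <= expR (ln (1 + eps) - j%:R / N%:R).
  rewrite expRD lnK ?posrE; last lra.
  rewrite (_ : (N%:R - j%:R) * 2 * p = (1 - j%:R / N%:R) * (N%:R * 2 * p)); last first.
    by field; rewrite gt_eqF.
  rewrite mulrC; apply: ler_pM; rewrite ?mulr_ge0 ?ler0n ?expR_ge1Dx //.
  by rewrite subr_ge0 ler_pdivrMr // mul1r ler_nat ltnW.
have factor0 : 0 <= (N%:R - j%:R) * 2 * p.
  by rewrite !mulr_ge0 // subr_ge0 ler_nat ltnW.
apply: le_trans (ler_pM _ factor0 (IH (ltnW jN)) factor_le) _.
  by rewrite mulr_ge0 ?exprn_ge0 ?ler0n.
rewrite -expRD ler_expR -natr1 le_eqVlt; apply/orP; left; apply/eqP.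
by field; rewrite gt_eqF.
Qed.

Lemma binomial_term_le (N j : nat) (p eps b : R) : (0 < N)%N -> (j <= N)%N ->
  0 <= p -> 0 < eps -> N%:R * 2 * p <= 1 + eps ->
  0 < b -> 4 * ln (1 + eps) <= b -> b * N%:R <= j%:R ->
  ('C(N, j) * odd_fact j)%N%:R * p ^+ j <= expR (b / 2) * expR (- (j%:R * (b / 4))).
Proof.
move=> N0 jN p0 eps0 Np b0 beps bj; rewrite -(ltr0n R) in N0.
have : ('C(N, j) * odd_fact j <= N ^_ j * 2 ^ j)%N.
  by rewrite -bin_ffact -mulnA leq_mul2l mulnC odd_fact_le orbT.
rewrite -(ler_nat R) => binom_le.
apply: le_trans (ler_wpM2r (exprn_ge0 _ p0) binom_le) _.
apply: le_trans (ffact_pow_le_expR jN p0 eps0 Np) _; rewrite -expRD ler_expR.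
have L0 : 0 <= ln (1 + eps) by apply: ln_ge0; lra.
have j1 : 1 <= j%:R :> R by rewrite ler1n -(ltr0n R); nra.
have : (j%:R - 1) * b / 2 <= j%:R * (j%:R - 1) / (2 * N%:R).
  rewrite ler_pdivlMr; last lra.
  rewrite (_ : (j%:R - 1) * b / 2 * (2 * N%:R) = (j%:R - 1) * (b * N%:R)); last by field.
  by rewrite [X in _ <= X]mulrC ler_wpM2l //; lra.
have : j%:R * ln (1 + eps) <= j%:R * (b / 4) by rewrite ler_wpM2l //; lra.
lra.
Qed.

Lemma sum_binomial_tail_le (n N : nat) (p eps b : R) : (2 <= n)%N -> (n <= 2 * N)%N ->
  0 <= p -> 0 < eps -> N%:R * 2 * p <= 1 + eps -> 0 < b -> b <= 1 ->
  4 * ln (1 + eps) <= b -> 8 * ln n%:R / n%:R <= b ^+ 2 ->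
  \sum_(j < N.+1 | b * N%:R <= j%:R) ('C(N, j) * odd_fact j)%N%:R * p ^+ j
    <= expR (1 / 2) * b.
Proof.
move=> n2 nN p0 eps0 Np b0 b1 beps bb.
apply: (@le_trans _ _ (\sum_(j < N.+1 | b * N%:R <= j%:R)
    expR (b / 2) * expR (- (j%:R * (b / 4))))).
  apply: ler_sum => j bj; apply: (binomial_term_le (eps := eps)) => //; first lia.
  by rewrite -ltnS.
rewrite -big_distrr /=; apply: le_trans (geometric_tail_le n2 nN b0 b1 bb).
apply: ler_wpM2l; rewrite ?expR_ge0 // sum_expR_geometric_le //; first lra.
have : N%:R <= N.+1%:R :> R by rewrite ler_nat.
have : 0 <= N%:R :> R by rewrite ler0n.
nra.
Qed.

Lemma le_sqr_max_sqrt (a x : R) : 0 <= a -> 0 <= x ->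
  x <= Num.max a (Num.sqrt x) ^+ 2.
Proof.
move=> a0 x0; rewrite -{1}(sqr_sqrtr x0) lerXn2r ?nnegrE ?sqrtr_ge0 //.
  by rewrite le_max a0.
by rewrite le_max lexx orbT.
Qed.

End RealBounds.

Unset Implicit Arguments.

Theorem mainTheorem3 (R : realType) (n k : nat) (lam eps : R)
  (Hhat : {set {set 'I_n}} -> {set {set 'I_n}}) (Hstar : {set {set 'I_n}}) :
  (1 <= k)%N -> ~~ odd (k * n) -> (0 < n)%N ->
  0 <= lam / n%:R <= 1 ->
  0 < eps < 1 ->
  lam * k%:R <= 1 + eps ->
  (* Hhat outputs a k-factor contained in G (whenever G contains some k-factor,
     as every observed G = G0 ∪ Hstar does) *)
  (forall G : {set {set 'I_n}},
      (exists F, kfactor k F && (F \subset G)) ->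
      kfactor k (Hhat G) && (Hhat G \subset G)) ->
  kfactor k Hstar ->
  let p := lam / n%:R in
  let beta := Num.max (4 * ln (1 + eps)) (Num.sqrt (8 * ln (n%:R) / n%:R)) in
  cond_prob p Hstar (fun G => 2 * beta <= loss R Hstar (Hhat G)) <= expR (1 / 2) * beta
  /\ cond_expect p Hstar (fun G => loss R Hstar (Hhat G)) <= 6 * beta.
Proof.
move=> k1 _ n0 p01 /andP[eps0 _] lamk hat kH p beta; have /andP[p0 _] := p01.
have H0 := kfactor_card_gt0 k1 n0 kH.
have n2 := nonempty_graph_vertices (kfactor_graph kH) H0.
have nH : (n <= 2 * #|Hstar|)%N by rewrite (kfactor_card kH) leq_pmull.
have Hp : #|Hstar|%:R * 2 * p <= 1 + eps.
  rewrite (_ : _ * p = lam * k%:R) // /p -natrM mulnC (kfactor_card kH) natrM.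
  by field; rewrite pnatr_eq0 -lt0n.
have ln_eps : 0 < ln (1 + eps) by rewrite ln_gt0 //; lra.
have beps : 4 * ln (1 + eps) <= beta by rewrite le_max lexx.
have b0 : 0 < beta by apply: lt_le_trans beps; lra.
have bb : 8 * ln n%:R / n%:R <= beta ^+ 2.
  by rewrite le_sqr_max_sqrt ?divr_ge0 ?mulr_ge0 ?ln_ge0 ?ler1n //; lra.
have prob : cond_prob p Hstar (fun G => 2 * beta <= loss R Hstar (Hhat G))
    <= expR (1 / 2) * beta.
  have [b1|b1] := lerP beta 1; last first.
    apply: le_trans (cond_prob_le1 p01 _ _) _; have := expR_ge1Dx (1 / 2 : R); nra.
  apply: le_trans (cond_prob_le_sum_bad p01 kH hat beta) _.
  apply: le_trans (sum_bad_kfactors_le p01 kH H0 b0) _.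
  exact: sum_binomial_tail_le n2 nH p0 eps0 Hp b0 b1 beps bb.
split => //; apply: le_trans (cond_expect_loss_le p01 kH hat H0 (ltW b0)) _.
by have := expR_half_le2 R; nra.
Qed.
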